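(* Let $d\geqslant 2$ and $k\geqslant 1$ be integers and let $a\in\mathbb{Z}_p$. Then (1) $L^d(a)$ is self-similar of index $p^k$, and (2) $L^d(a)$ is strongly hereditarily self-similar of index $p^k$.
   Context: $p$ is any prime. For $d\geqslant 2$ and $a\in\mathbb{Z}_p$, $L^d(a)$ is the $\mathbb{Z}_p$-Lie lattice $\mathbb{Z}_p^d$ with canonical basis $(x_0,\dots,x_{d-1})$ and bracket determined by $[x_i,x_j]=0$ and $[x_0,x_i]=ax_i$ for $i,j\in\{1,\dots,d-1\}$. A virtual endomorphism of a $\mathbb{Z}_p$-Lie lattice $L$ is a homomorphism of algebras $\varphi:M\to L$ with $M\subseteq L$ a finite-index subalgebra, of index $[L:M]$. An ideal $I$ of $L$ is $\varphi$-invariant if it lies in the domain of every power of $\varphi$ and $\varphi(I)\subseteq I$; $\varphi$ is simple if no non-zero ideal is $\varphi$-invariant. $L$ is self-similar of index $p^k$ if it has a simple virtual endomorphism of index $p^k$; it is strongly hereditarily self-similar of index $p^k$ if it is self-similar of index $p^k$ and every non-zero subalgebra of $L$ is self-similar of index $p^k$. *)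

From HB Require Import structures.
From mathcomp Require Import all_boot all_algebra.
From mathcomp Require Import boolp.
Set Implicit Arguments. Unset Strict Implicit. Unset Printing Implicit Defensive.
Import GRing.Theory.
Local Open Scope ring_scope.

(* An element of Z_p is a coherent sequence (x_n)_n with x_n in [0, q^n) and
   x_n = x_(n+1) mod q^n, where q = maxn p 2 (= p for p prime): the inverse
   limit of the rings Z/p^n Z. *)

Lemma modz_modz_dvd (z M N : int) : dvdz N M -> modz (modz z M) N = modz z N.
Proof.
move/dvdzP=> [c ->].
have -> : modz z N = modz ((divz z (c * N)) * c * N + modz z (c * N)) N.
  by rewrite -mulrA -divz_eq.
by rewrite -(modzDml (divz z (c * N) * c * N) (modz z (c * N)) N) modzMl add0r.
Qed.

Section Zp.
Variable p : nat.
Definition zp_base : nat := maxn p 2.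
Definition zp_mod (n : nat) : int := (zp_base ^ n)%:Z.
Lemma zp_mod_dvd n : dvdz (zp_mod n) (zp_mod n.+1).
Proof. by rewrite /zp_mod expnS PoszM; apply: dvdz_mull; exact: dvdzz. Qed.

Record padic := PAdic {
  pa_seq : nat -> int ;
  pa_coh : forall n, pa_seq n = modz (pa_seq n.+1) (zp_mod n) }.

Lemma padic_eq (x y : padic) : (forall n, pa_seq x n = pa_seq y n) -> x = y.
Proof.
case: x y => [f Hf] [g Hg] /= E.
have efg : f = g by apply: functional_extensionality_dep.
subst g; by rewrite (Prop_irrelevance Hf Hg).
Qed.

Lemma pa_seq_mod (x : padic) n : modz (pa_seq x n) (zp_mod n) = pa_seq x n.
Proof. by have h := pa_coh x n; rewrite {1}h modz_mod -h. Qed.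

Definition lift2_seq (g : int -> int -> int) (x y : padic) (n : nat) : int :=
  modz (g (pa_seq x n) (pa_seq y n)) (zp_mod n).

Lemma lift2_coh (g : int -> int -> int)
  (Hg : forall a b N, modz (g (modz a N) (modz b N)) N = modz (g a b) N)
  (x y : padic) n :
  lift2_seq g x y n = modz (lift2_seq g x y n.+1) (zp_mod n).
Proof.
rewrite /lift2_seq modz_modz_dvd ?zp_mod_dvd // -Hg (pa_coh x) (pa_coh y).
by rewrite Hg.
Qed.

Definition lift2 g Hg x y := PAdic (@lift2_coh g Hg x y).

Definition lift1_seq (g : int -> int) (x : padic) (n : nat) : int :=
  modz (g (pa_seq x n)) (zp_mod n).
Lemma lift1_coh (g : int -> int)
  (Hg : forall a N, modz (g (modz a N)) N = modz (g a) N) (x : padic) n :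
  lift1_seq g x n = modz (lift1_seq g x n.+1) (zp_mod n).
Proof.
by rewrite /lift1_seq modz_modz_dvd ?zp_mod_dvd // -Hg (pa_coh x) Hg.
Qed.
Definition lift1 g Hg x := PAdic (@lift1_coh g Hg x).

Lemma const_coh (c : int) n :
  modz c (zp_mod n) = modz (modz c (zp_mod n.+1)) (zp_mod n).
Proof. by rewrite modz_modz_dvd ?zp_mod_dvd. Qed.
Definition pa_const (c : int) := PAdic (const_coh c).

Definition pa_add := @lift2 (fun a b => a + b) (fun a b N => modzDm a b N).
Definition pa_mul := @lift2 (fun a b => a * b) (fun a b N => modzMm a b N).
Definition pa_opp := @lift1 (fun a => - a) (fun a N => modzNm a N).
Definition pa_zero := pa_const 0.
Definition pa_one := pa_const 1.
End Zp.

HB.instance Definition _ p := gen_eqMixin (padic p).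
HB.instance Definition _ p := gen_choiceMixin (padic p).

Section ZpRing.
Variable p : nat.
Local Notation Zp := (padic p).

Lemma pa_addA : associative (@pa_add p).
Proof.
move=> x y z; apply: padic_eq => n /=; rewrite /lift2_seq /=.
rewrite (modzDmr (pa_seq x n)) (modzDml (pa_seq x n + pa_seq y n)) addrA.
by congr modz.
Qed.
Lemma pa_addC : commutative (@pa_add p).
Proof.
move=> x y; apply: padic_eq => n /=; rewrite /lift2_seq /= addrC.
by congr modz.
Qed.
Lemma pa_add0 : left_id (@pa_zero p) (@pa_add p).
Proof.
move=> x; apply: padic_eq => n /=; rewrite /lift2_seq /=.
rewrite (modzDml 0) add0r; exact: pa_seq_mod.
Qed.
Lemma pa_addN : left_inverse (@pa_zero p) (@pa_opp p) (@pa_add p).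
Proof.
move=> x; apply: padic_eq => n /=; rewrite /lift2_seq /lift1_seq /=.
rewrite (modzDml (- pa_seq x n)) addNr; by congr modz.
Qed.
HB.instance Definition _ := GRing.isZmodule.Build Zp pa_addA pa_addC pa_add0 pa_addN.

Lemma pa_mulA : associative (@pa_mul p).
Proof.
move=> x y z; apply: padic_eq => n /=; rewrite /lift2_seq /=.
rewrite (modzMmr (pa_seq x n)) (modzMml (pa_seq x n * pa_seq y n)) mulrA.
by congr modz.
Qed.
Lemma pa_mulC : commutative (@pa_mul p).
Proof.
move=> x y; apply: padic_eq => n /=; rewrite /lift2_seq /= mulrC.
by congr modz.
Qed.
Lemma pa_mul1 : left_id (@pa_one p) (@pa_mul p).
Proof.
move=> x; apply: padic_eq => n /=; rewrite /lift2_seq /=.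
rewrite (modzMml 1) mul1r; exact: pa_seq_mod.
Qed.
Lemma pa_mulDl : left_distributive (@pa_mul p) (@pa_add p).
Proof.
move=> x y z; apply: padic_eq => n /=; rewrite /lift2_seq /=.
rewrite (modzMml (pa_seq x n + pa_seq y n)) mulrDl.
rewrite -(modzDm (pa_seq x n * pa_seq z n)).
by congr modz.
Qed.
Lemma pa_one_neq0 : (@pa_one p) != (@pa_zero p).
Proof.
apply/eqP => /(congr1 (fun x => pa_seq x 1)) /=.
rewrite /zp_mod expn1 mod0z modz_small //.
apply/andP; split => //; rewrite ltz_nat /zp_base; exact: leq_maxr.
Qed.
HB.instance Definition _ := GRing.Zmodule_isComNzRing.Build Zp
  pa_mulA pa_mulC pa_mul1 pa_mulDl pa_one_neq0.
End ZpRing.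


(* A Z_p-Lie lattice is given by its underlying Z_p-module V and its bracket.
   Subsets of V are predicates V -> Prop. *)
Section LieLattice.
Variables (R : comNzRingType) (V : lmodType R) (br : V -> V -> V).

Definition submodule (S : V -> Prop) : Prop :=
  [/\ S 0, (forall x y, S x -> S y -> S (x + y)) &
      (forall (c : R) x, S x -> S (c *: x))].

Definition subalgebra (S : V -> Prop) : Prop :=
  submodule S /\ (forall x y, S x -> S y -> S (br x y)).

Definition ideal_of (H I : V -> Prop) : Prop :=
  [/\ submodule I, (forall x, I x -> H x) &
      (forall h x, H h -> I x -> I (br h x))].

(* [H : M] = N : M is contained in H and H/M has exactly N elements
   (r is a complete and irredundant set of coset representatives) *)
Definition index_eq (H M : V -> Prop) (N : nat) : Prop :=
  (forall x, M x -> H x) /\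
  (exists r : 'I_N -> V, (forall i, H (r i)) /\
    (forall h, H h -> exists! i : 'I_N, M (h - r i))).

(* phi : M -> H is a virtual endomorphism of the Lie lattice H with domain M
   of index N (phi is a total function; only its values on M matter) *)
Definition virtual_endo (H M : V -> Prop) (phi : V -> V) (N : nat) : Prop :=
  [/\ subalgebra M, index_eq H M N, (forall x, M x -> H (phi x)) &
      [/\ (forall x y, M x -> M y -> phi (x + y) = phi x + phi y),
          (forall (c : R) x, M x -> phi (c *: x) = c *: phi x) &
          (forall x y, M x -> M y -> phi (br x y) = br (phi x) (phi y))]].

(* domain of the n-th power of phi (phi^0 = id on H) *)
Fixpoint dom_pow (H M : V -> Prop) (phi : V -> V) (n : nat) (x : V) : Prop :=
  match n with
  | 0 => H x
  | n'.+1 => M x /\ dom_pow H M phi n' (phi x)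
  end.

Definition invariant_ideal (H M : V -> Prop) (phi : V -> V) (I : V -> Prop) :=
  [/\ ideal_of H I, (forall n x, I x -> dom_pow H M phi n x) &
      (forall x, I x -> I (phi x))].

Definition simple_ve (H M : V -> Prop) (phi : V -> V) : Prop :=
  forall I, invariant_ideal H M phi I -> forall x, I x -> x = 0.

Definition self_similar_sub (H : V -> Prop) (N : nat) : Prop :=
  exists (M : V -> Prop) (phi : V -> V),
    virtual_endo H M phi N /\ simple_ve H M phi.

Definition self_similar (N : nat) : Prop := self_similar_sub (fun _ => True) N.

Definition strongly_hereditarily_self_similar (N : nat) : Prop :=
  self_similar N /\
  forall H : V -> Prop, subalgebra H -> (exists x, H x /\ x <> 0) ->
    self_similar_sub H N.
End LieLattice.

(* L^d(a) = Z_p^d (row vectors), canonical basis x_i = delta_mx 0 i, bracket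
   the bilinear extension of [x_i,x_j] = 0, [x_0,x_i] = a x_i = -[x_i,x_0]
   (i, j in {1..d-1}), [x_0,x_0] = 0. *)
Definition Ld_basis (p d : nat) (i : 'I_d) : 'rV[padic p]_d := delta_mx 0 i.

Definition Ld_table (p d : nat) (a : padic p) (i j : 'I_d) : 'rV[padic p]_d :=
  if (val i == 0%N) && (val j != 0%N) then a *: Ld_basis p j
  else if (val j == 0%N) && (val i != 0%N) then - (a *: Ld_basis p i)
  else 0.

Definition Ld_bracket (p d : nat) (a : padic p) (u v : 'rV[padic p]_d)
  : 'rV[padic p]_d :=
  \sum_(i < d) \sum_(j < d) (u 0 i * v 0 j) *: Ld_table a i j.

(* The bracket of L^d(a) is [u, v] = a (u_0 v - v_0 u), so every submodule is
   a subalgebra, and a nonzero subalgebra H is a free Z_p-module of finite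
   rank. If the bracket vanishes on H, take a basis g_0, ..., g_n of H;
   otherwise take b in H whose first coordinate generates the first
   coordinates of H, and a basis g_0, ..., g_n of K = H /\ ker u_0 (K <> 0,
   since H = Z_p b would be abelian), so that H = Z_p b (+) K.  The virtual
   endomorphism fixes b and shifts K: g_(i+1) |-> g_i and p^k g_0 |-> g_n, on
   the index-p^k sublattice where the g_0-coordinate is divisible by p^k.  It
   preserves u_0, hence the bracket.  An invariant ideal has K-coordinates
   divisible by every power of p^k, so it lies in Z_p b; as [g_0, e b] =
   -a e b_0 g_0 must lie there too, the ideal is 0. *)

From HB Require Import structures.
From mathcomp Require Import all_boot all_algebra.
From mathcomp Require Import all_order boolp ring.
Set Implicit Arguments. Unset Strict Implicit. Unset Printing Implicit Defensive.
Import Order.TTheory GRing.Theory Num.Theory.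
Local Open Scope ring_scope.

Definition dvdr (R : pzRingType) (x y : R) : Prop := exists z, y = x * z.

Lemma dvdr_trans (R : pzRingType) (x y z : R) :
  dvdr x y -> dvdr y z -> dvdr x z.
Proof. by move=> [u ->] [v ->]; exists (u * v); rewrite mulrA. Qed.

Lemma dvdrD (R : pzRingType) (x y z : R) : dvdr x y -> dvdr x z -> dvdr x (y + z).
Proof. by move=> [u ->] [v ->]; exists (u + v); rewrite mulrDr. Qed.

Lemma dvdr_mull (R : comPzRingType) (c x y : R) : dvdr x y -> dvdr x (c * y).
Proof. by move=> [u ->]; exists (c * u); rewrite mulrCA. Qed.

Lemma modz_inv_unique (N X z w : int) : 0 <= z < N -> 0 <= w < N ->
  modz (X * z) N = modz 1 N -> modz (X * w) N = modz 1 N -> z = w.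
Proof.
move=> z_range w_range Xz Xw; rewrite -(modz_small z_range) -(modz_small w_range).
transitivity (modz (z * (X * w)) N); first by rewrite -modzMmr Xw modzMmr mulr1.
by rewrite (mulrC X w) mulrCA (mulrC z X) -modzMmr Xz modzMmr mulr1.
Qed.

Section PadicIntegers.
Variable p : nat.
Local Notation Zp := (padic p).
Local Notation q := (zp_base p).
Local Notation zm := (zp_mod p).

Lemma zp_base_gt1 : (1 < q)%N.
Proof. by rewrite /zp_base leq_max orbT. Qed.

Lemma zp_mod_gt0 n : 0 < zm n.
Proof. by rewrite ltz_nat expn_gt0 (ltn_trans _ zp_base_gt1). Qed.

Lemma zp_mod_neq0 n : zm n != 0.
Proof. by rewrite gt_eqF ?zp_mod_gt0. Qed.

Lemma zp_modD m n : zm (m + n) = zm m * zm n.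
Proof. by rewrite /zp_mod expnD PoszM. Qed.

Lemma pa_seq_range (x : Zp) n : 0 <= pa_seq x n < zm n.
Proof.
by rewrite -pa_seq_mod modz_ge0 ?zp_mod_neq0 ?ltz_pmod ?zp_mod_gt0.
Qed.

Lemma pa_seq_modD (x : Zp) n m : pa_seq x n = modz (pa_seq x (n + m)) (zm n).
Proof.
elim: m => [|m IHm]; first by rewrite addn0 pa_seq_mod.
by rewrite IHm (pa_coh x (n + m)) addnS modz_modz_dvd // zp_modD; apply: dvdz_mulr.
Qed.

Lemma pa_seqD (x y : Zp) n :
  pa_seq (x + y) n = modz (pa_seq x n + pa_seq y n) (zm n).
Proof. by []. Qed.

Lemma pa_seqM (x y : Zp) n :
  pa_seq (x * y) n = modz (pa_seq x n * pa_seq y n) (zm n).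
Proof. by []. Qed.

Lemma pa_seqB (x y : Zp) n :
  pa_seq (x - y) n = modz (pa_seq x n - pa_seq y n) (zm n).
Proof. by rewrite pa_seqD /= /lift1_seq modzDmr. Qed.

Lemma pa_seq_natr m n : pa_seq (m%:R : Zp) n = modz m (zm n).
Proof.
elim: m => [|m IHm]; first by [].
by rewrite -addn1 natrD pa_seqD IHm modzDm PoszD.
Qed.

Lemma pa_eq0 (x : Zp) : (forall n, pa_seq x n = 0) -> x = 0.
Proof. by move=> x0; apply: padic_eq => n; rewrite x0 (pa_seq_natr 0) mod0z. Qed.

Lemma pa_seq_eq0P (x : Zp) n : pa_seq x n = 0 <-> dvdr (q ^ n)%:R x.
Proof.
split=> [xn0|[y ->]]; last by rewrite pa_seqM pa_seq_natr modzMml modzMr.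
have dvd_seq m : (zm n %| pa_seq x (n + m))%Z.
  by apply/dvdz_mod0P; rewrite -pa_seq_modD.
pose s m := divz (pa_seq x (n + m)) (zm n).
have sK m : s m * zm n = pa_seq x (n + m) by rewrite divzK.
have s_coh m : s m = modz (s m.+1) (zm m).
  apply: (mulIf (zp_mod_neq0 n)); rewrite sK mulz_modl ?zp_mod_gt0 // sK.
  by rewrite -zp_modD (addnC m n) addnS -pa_coh.
exists (PAdic s_coh); apply: padic_eq => m.
by rewrite pa_seqM pa_seq_natr modzMml /= mulrC sK addnC -pa_seq_modD.
Qed.

Lemma natr_pow_lreg n : GRing.lreg ((q ^ n)%:R : Zp).
Proof.
apply: mulrI0_lreg => y qy0; apply: pa_eq0 => m.
move: (congr1 (fun z => pa_seq z (n + m)%N) qy0).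
rewrite pa_seqM pa_seq_natr modzMml (pa_seq_natr 0) mod0z.
move=> /dvdz_mod0P; rewrite zp_modD dvdz_mul2l ?zp_mod_neq0 // => /dvdz_mod0P.
by rewrite addnC -pa_seq_modD.
Qed.

Lemma natr_pow_separated (c : Zp) : (forall n, dvdr (q ^ n)%:R c) -> c = 0.
Proof. by move=> c_dvd; apply: pa_eq0 => n; apply/pa_seq_eq0P. Qed.

Lemma natr_pow_expr_separated k (c : Zp) :
  (0 < k)%N -> (forall m, dvdr (((q ^ k)%:R : Zp) ^+ m) c) -> c = 0.
Proof.
move=> k_gt0 c_dvd; apply: natr_pow_separated => m; apply: dvdr_trans (c_dvd m).
rewrite -natrX -expnM -(subnKC (leq_pmull m k_gt0)) expnD natrM.
by exists ((q ^ (k * m - m))%:R).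
Qed.

Hypothesis p_prime : prime p.

Lemma zp_base_prime : q = p.
Proof. exact/maxn_idPl/prime_gt1. Qed.

Lemma natr_pow_prime n : ((q ^ n)%:R : Zp) = (p ^ n)%:R.
Proof. by rewrite zp_base_prime. Qed.

Lemma pa_seq_coprime (x : Zp) n : pa_seq x 1 != 0 -> coprimez (pa_seq x n) (zm n).
Proof.
move=> x1; rewrite coprimezE /zp_mod absz_nat.
case: n => [|n]; first by rewrite expn0 coprimen1.
rewrite coprime_pexpr // coprime_sym zp_base_prime prime_coprime //.
apply: contra x1 => p_dvd; rewrite (pa_seq_modD x 1 n) add1n.
by apply/eqP/dvdz_mod0P; rewrite dvdzE absz_nat /zp_mod expn1 zp_base_prime.
Qed.

Lemma pa_unit (x : Zp) : pa_seq x 1 != 0 -> exists y, x * y = 1.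
Proof.
move=> x1.
have inv_mod n : exists z,
    0 <= z < zm n /\ modz (pa_seq x n * z) (zm n) = modz 1 (zm n).
  have [u [v uv]] := Bezoutz (pa_seq x n) (zm n).
  exists (modz u (zm n)); split.
    by rewrite modz_ge0 ?zp_mod_neq0 ?ltz_pmod ?zp_mod_gt0.
  move/eqP: (pa_seq_coprime n x1) uv => -> uv.
  by rewrite modzMmr -uv addrC modzMDl mulrC.
have [s s_inv] := choice inv_mod.
have s_coh n : s n = modz (s n.+1) (zm n).
  have [s_range s_eq] := s_inv n; have [_ s1_eq] := s_inv n.+1.
  apply: (modz_inv_unique s_range _ s_eq).
    by rewrite modz_ge0 ?zp_mod_neq0 ?ltz_pmod ?zp_mod_gt0.
  rewrite modzMmr (pa_coh x n) modzMml -(modz_modz_dvd _ (zp_mod_dvd p n)).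
  by rewrite s1_eq modz_modz_dvd // zp_mod_dvd.
exists (PAdic s_coh); apply: padic_eq => n.
by rewrite pa_seqM; case: (s_inv n).
Qed.

Lemma pa_factor (x : Zp) : x != 0 ->
  exists v u, x = (p ^ v)%:R * u /\ exists u', u * u' = 1.
Proof.
move=> x_neq0.
have x_ex : exists n, pa_seq x n != 0.
  have [//|seq_eq0] := pselect (exists n, pa_seq x n != 0).
  case/eqP: x_neq0; apply: pa_eq0 => n; apply/eqP/negPn/negP => xn_neq0.
  by apply: seq_eq0; exists n.
case: (ex_minnP x_ex) => -[|v] xv_neq0 v_min.
  by move: xv_neq0; rewrite -pa_seq_mod /zp_mod expn0 modz1 eqxx.
have [u x_eq] : dvdr (q ^ v)%:R x.
  by apply/pa_seq_eq0P/eqP; apply: contraT => /v_min; rewrite ltnn.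
have u1_neq0 : pa_seq u 1 != 0.
  apply: contra xv_neq0 => /eqP/pa_seq_eq0P[w u_eq].
  by apply/eqP/pa_seq_eq0P; exists w; rewrite x_eq u_eq mulrA -natrM -expnSr.
by exists v, u; split; [rewrite x_eq zp_base_prime | exact: pa_unit].
Qed.

Lemma pa_mul_eq0 (x y : Zp) : x * y = 0 -> x = 0 \/ y = 0.
Proof.
move=> xy0; have [->|x_neq0] := eqVneq x 0; [by left | right].
have [v [u [x_eq [u' uu']]]] := pa_factor x_neq0.
have uy0 : u * y = 0.
  by apply: (@natr_pow_lreg v); rewrite zp_base_prime mulr0 mulrA -x_eq.
by rewrite -[y]mul1r -uu' mulrAC uy0 mul0r.
Qed.

Lemma pa_principal (J : Zp^o -> Prop) :
  submodule J -> exists g, J g /\ forall c, J c -> dvdr g c.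
Proof.
move=> [J0 JD JZ].
have [[c0 [Jc0 c0_neq0]]|J_eq0] := pselect (exists c, J c /\ c != 0); last first.
  exists 0; split=> // c Jc; exists 0; rewrite mulr0.
  by apply/eqP/negPn/negP => c_neq0; apply: J_eq0; exists c.
pose P v := exists c u, [/\ J c, c = (p ^ v)%:R * u & exists u', u * u' = 1].
have P_J c : J c -> c != 0 -> exists v, `[< P v >].
  move=> Jc /pa_factor[v [u [c_eq u_unit]]].
  by exists v; apply/asboolP; exists c, u.
case: (ex_minnP (P_J c0 Jc0 c0_neq0)) => v.
move=> /asboolP[c [u [Jc c_eq [u' uu']]]] v_min.
exists (p ^ v)%:R; split.
  have -> : (p ^ v)%:R = u' *: (c : Zp^o).
    by rewrite c_eq [_ *: _]mulrCA (mulrC u') uu' mulr1.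
  exact: JZ.
move=> c1 Jc1; have [->|c1_neq0] := eqVneq c1 0; first by exists 0; rewrite mulr0.
have [w [u1 [c1_eq u1_unit]]] := pa_factor c1_neq0.
have /v_min v_le : `[< P w >] by apply/asboolP; exists c1, u1.
by exists ((p ^ (w - v))%:R * u1); rewrite c1_eq mulrA -natrM -expnD subnKC.
Qed.

Lemma pa_residue k (c : Zp) : exists! i : 'I_(p ^ k), dvdr (p ^ k)%:R (c - i%:R).
Proof.
have residue_mod (i : 'I_(p ^ k)) : modz i (zm k) = i.
  by rewrite modz_small // /zp_mod zp_base_prime ltz_nat ltn_ord.
have dvdE (i : 'I_(p ^ k)) :
    dvdr (p ^ k)%:R (c - i%:R) <-> (zm k %| pa_seq c k - (i : nat)%:Z)%Z.
  rewrite -natr_pow_prime -pa_seq_eq0P pa_seqB pa_seq_natr residue_mod.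
  by split=> [/dvdz_mod0P|/dvdz_mod0P].
move: (pa_seq_range c k); case ck: (pa_seq c k) => [i|//] /andP[_ i_lt].
have i_ord : (i < p ^ k)%N by rewrite -zp_base_prime -ltz_nat.
exists (Ordinal i_ord); split=> [|j /dvdE].
  by apply/dvdE; rewrite ck subrr dvdz0.
rewrite -eqz_mod_dvd ck => /eqP; rewrite (residue_mod (Ordinal i_ord)) residue_mod.
by move=> [ij]; apply: val_inj.
Qed.

End PadicIntegers.

Section RowCoord.
Variables (R : pzRingType) (d : nat) (j : 'I_d).

Definition row_coord (x : 'rV[R]_d) : R^o := x 0 j.

Fact row_coord_is_nmod_morphism : nmod_morphism row_coord.
Proof. by split=> [|x y]; rewrite /row_coord mxE. Qed.
HB.instance Definition _ := GRing.isNmodMorphism.Build 'rV[R]_d R^o row_coord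
  row_coord_is_nmod_morphism.

Fact row_coordZ : scalable_for *%R row_coord.
Proof. by move=> c x; rewrite /row_coord mxE. Qed.
HB.instance Definition _ := GRing.isScalable.Build R 'rV[R]_d R^o *%R row_coord
  row_coordZ.
End RowCoord.

Section Submodules.
Variables (R : comNzRingType) (V : lmodType R).
Implicit Types (S : V -> Prop) (f : {scalar V}).

Definition module_basis S n (g : 'I_n -> V) : Prop :=
  [/\ forall i, S (g i),
      forall x, S x -> exists c : 'I_n -> R, x = \sum_i c i *: g i &
      forall c : 'I_n -> R, \sum_i c i *: g i = 0 -> forall i, c i = 0].

Lemma sum_scale_delta n (F : 'I_n -> V) j : \sum_i (i == j)%:R *: F i = F j.
Proof.
rewrite (bigD1 j) //= eqxx scale1r big1 ?addr0 // => i /negbTE->.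
by rewrite scale0r.
Qed.

Lemma submodule_sum S (I : finType) (F : I -> V) :
  submodule S -> (forall i, S (F i)) -> S (\sum_i F i).
Proof. by move=> [S0 SD _] SF; apply: big_ind. Qed.

Lemma submoduleB S x y : submodule S -> S x -> S y -> S (x - y).
Proof. by move=> [_ SD SZ] Sx Sy; rewrite -scaleN1r; apply/SD/SZ. Qed.

Lemma submodule_ker S f : submodule S -> submodule (fun x => S x /\ f x = 0).
Proof.
move=> [S0 SD SZ]; split=> [|x y [Sx fx0] [Sy fy0]|c x [Sx fx0]].
- by rewrite linear0.
- by rewrite linearD fx0 fy0 addr0; split=> //; apply: SD.
- by rewrite scalarZ fx0 mulr0; split=> //; apply: SZ.
Qed.

Lemma pivot_decomposition S f b n (g : 'I_n -> V) :
  submodule S -> S b -> (forall x, S x -> dvdr (f b) (f x)) ->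
  (forall x, S x -> f x = 0 -> exists c, x = \sum_i c i *: g i) ->
  forall x, S x -> exists e c, x = e *: b + \sum_i c i *: g i.
Proof.
move=> S_sub Sb f_dvd ker_span x Sx; have [e fx_eq] := f_dvd x Sx.
have [c x_eq] : exists c, x - e *: b = \sum_i c i *: g i.
  apply: ker_span; first by apply: submoduleB => //; case: S_sub => _ _; apply.
  by rewrite linearB scalarZ fx_eq mulrC subrr.
by exists e, c; rewrite -x_eq addrC subrK.
Qed.

Hypothesis R_domain : forall x y : R, x * y = 0 -> x = 0 \/ y = 0.

Lemma pivot_free f b n (g : 'I_n -> V) :
  f b != 0 -> (forall i, f (g i) = 0) ->
  (forall c, \sum_i c i *: g i = 0 -> forall i, c i = 0) ->
  forall e c, e *: b + \sum_i c i *: g i = 0 -> e = 0 /\ forall i, c i = 0.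
Proof.
move=> fb_neq0 fg0 g_free e c sum0.
have e0 : e = 0.
  have := congr1 f sum0; rewrite linearD scalarZ linear_sum linear0.
  rewrite big1 => [|i _]; last by rewrite scalarZ fg0 mulr0.
  by rewrite addr0 => /R_domain[//|/eqP]; rewrite (negbTE fb_neq0).
by split=> //; apply: g_free; move: sum0; rewrite e0 scale0r add0r.
Qed.

Definition cons_fun b n (g : 'I_n -> V) (i : 'I_n.+1) : V :=
  if unlift ord0 i is Some j then g j else b.

Lemma sum_cons_fun b n (g : 'I_n -> V) (c : 'I_n.+1 -> R) :
  \sum_i c i *: cons_fun b g i = c ord0 *: b + \sum_j c (lift ord0 j) *: g j.
Proof.
rewrite big_ord_recl /cons_fun unlift_none.
by congr (_ + _); apply: eq_bigr => j _; rewrite liftK.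
Qed.

Lemma module_basis_cons S f b n (g : 'I_n -> V) :
  submodule S -> S b -> f b != 0 -> (forall x, S x -> dvdr (f b) (f x)) ->
  module_basis (fun x => S x /\ f x = 0) g -> module_basis S (cons_fun b g).
Proof.
move=> S_sub Sb fb_neq0 f_dvd [gK g_span g_free]; split.
- by move=> i; rewrite /cons_fun; case: unliftP => [j _|_] //; case: (gK j).
- move=> x Sx; have [e [c ->]] := pivot_decomposition S_sub Sb f_dvd
    (fun y Sy fy0 => g_span y (conj Sy fy0)) Sx.
  exists (fun i => if unlift ord0 i is Some j then c j else e).
  rewrite sum_cons_fun unlift_none; congr (_ + _).
  by apply: eq_bigr => j _; rewrite liftK.
- move=> c; rewrite sum_cons_fun => /(pivot_free fb_neq0 _ g_free)[|c0 c_lift0 i].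
    by move=> j; case: (gK j).
  by case: (unliftP ord0 i) => [j ->|->].
Qed.

Hypothesis R_principal : forall J : R^o -> Prop,
  submodule J -> exists g, J g /\ forall c, J c -> dvdr g c.

Lemma submodule_pivot S f : submodule S ->
  exists b, S b /\ forall x, S x -> dvdr (f b) (f x).
Proof.
move=> [S0 SD SZ].
have [|_ [[b [Sb ->]] fb_gen]] :=
  R_principal (J := fun c => exists x, S x /\ c = f x).
  split=> [|_ _ [x [Sx ->]] [y [Sy ->]]|c _ [x [Sx ->]]].
  - by exists 0; rewrite linear0.
  - by exists (x + y); rewrite linearD; split=> //; apply: SD.
  - by exists (c *: x); rewrite scalarZ; split=> //; apply: SZ.
by exists b; split=> // x Sx; apply: fb_gen; exists x.
Qed.
End Submodules.

Section RowSubmodules.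
Variable R : comNzRingType.
Hypothesis R_domain : forall x y : R, x * y = 0 -> x = 0 \/ y = 0.
Hypothesis R_principal : forall J : R^o -> Prop,
  submodule J -> exists g, J g /\ forall c, J c -> dvdr g c.

Lemma rV_submodule_basis d (S : 'rV[R]_d -> Prop) :
  submodule S -> exists n (g : 'I_n -> 'rV[R]_d), module_basis S g.
Proof.
suff basis_from m : forall S : 'rV[R]_d -> Prop, submodule S ->
    (forall x, S x -> forall i : 'I_d, (m <= i)%N -> x 0 i = 0) ->
    exists n (g : 'I_n -> 'rV[R]_d), module_basis S g.
  by move=> S_sub; apply: (basis_from d) => // x _ i; rewrite leqNgt ltn_ord.
elim: m => [|m IHm] {}S S_sub S_vanish.
  exists 0%N, (fun=> 0); split=> [[]//|x Sx|c _ []//].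
  by exists (fun=> 0); rewrite big_ord0; apply/rowP => i; rewrite mxE S_vanish.
have [m_lt|d_le] := ltnP m d; last first.
  apply: IHm => // x Sx i m_le; apply: S_vanish => //.
  by move: (ltn_ord i); rewrite ltnNge (leq_trans d_le m_le).
pose f : {scalar 'rV[R]_d} := row_coord (Ordinal m_lt).
have [n [g g_basis]] : exists n (g : 'I_n -> 'rV[R]_d),
    module_basis (fun x => S x /\ f x = 0) g.
  apply: IHm => [|x [Sx fx0] i]; first exact: submodule_ker.
  rewrite leq_eqVlt => /predU1P[m_eq|]; last exact: S_vanish.
  by rewrite -fx0 /f /row_coord; congr (x 0 _); apply: val_inj.
have [b [Sb f_dvd]] := submodule_pivot R_principal f S_sub.
have [fb0|fb_neq0] := eqVneq (f b) 0; last first.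
  exists n.+1, (cons_fun b g).
  exact: (module_basis_cons R_domain S_sub Sb fb_neq0 f_dvd g_basis).
exists n, g; case: g_basis => gK g_span g_free; split=> // [i|x Sx].
- by case: (gK i).
- by apply: g_span; split=> //; have [e ->] := f_dvd x Sx; rewrite fb0 mul0r.
Qed.
End RowSubmodules.

Section Coordinates.
Variables (R : comNzRingType) (V : lmodType R) (b : V) (n : nat) (g : 'I_n -> V).
Hypothesis decomp_free : forall e (c : 'I_n -> R),
  e *: b + \sum_i c i *: g i = 0 -> e *: b = 0 /\ forall i, c i = 0.

(* When b is torsion (e.g. b = 0) only b_coord x *: b is determined by x. *)
Definition coords (x : V) : R * ('I_n -> R) :=
  if pselect (exists ec : R * ('I_n -> R), x = ec.1 *: b + \sum_i ec.2 i *: g i)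
  is left decomp then projT1 (cid decomp) else (0, fun=> 0).

Definition b_coord x := (coords x).1.
Definition g_coord x := (coords x).2.

Lemma coordsK x e (c : 'I_n -> R) : x = e *: b + \sum_i c i *: g i ->
  x = b_coord x *: b + \sum_i g_coord x i *: g i.
Proof.
move=> x_eq; rewrite /b_coord /g_coord /coords.
case: pselect => [decomp|no_decomp]; first exact: (projT2 (cid decomp)).
by case: no_decomp; exists (e, c).
Qed.

Lemma coords_unique x e (c : 'I_n -> R) : x = e *: b + \sum_i c i *: g i ->
  b_coord x *: b = e *: b /\ forall i, g_coord x i = c i.
Proof.
move=> x_eq; have := coordsK x_eq; rewrite {1}x_eq => /eqP; rewrite -subr_eq0.
rewrite opprD addrACA -scalerBl -sumrB.
under eq_bigr do rewrite -scalerBl.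
move=> /eqP/decomp_free[eb0 c0]; split.
  by apply/eqP; rewrite eq_sym -subr_eq0 -scalerBl eb0.
by move=> i; apply/eqP; rewrite eq_sym -subr_eq0 c0.
Qed.
End Coordinates.

Section ShiftEndomorphism.
Variables (R : comNzRingType) (V : lmodType R) (S : V -> Prop).
Variables (b : V) (n : nat) (g : 'I_n.+1 -> V).
Hypotheses (S_sub : submodule S) (Sb : S b) (Sg : forall i, S (g i)).
Hypothesis S_span : forall x, S x -> exists e c, x = e *: b + \sum_i c i *: g i.
Hypothesis decomp_free : forall e (c : 'I_n.+1 -> R),
  e *: b + \sum_i c i *: g i = 0 -> e *: b = 0 /\ forall i, c i = 0.

Local Notation bc := (b_coord b g).
Local Notation gc := (g_coord b g).

Lemma coordsK_in x : S x -> x = bc x *: b + \sum_i gc x i *: g i.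
Proof. by move=> /S_span[e [c x_eq]]; apply: coordsK x_eq. Qed.

Lemma decomp_in e (c : 'I_n.+1 -> R) : S (e *: b + \sum_i c i *: g i).
Proof.
case: S_sub => _ SD SZ; apply: SD; first exact: SZ.
by apply: submodule_sum => // i; apply: SZ.
Qed.

Lemma coordsD x y : S x -> S y ->
  bc (x + y) *: b = (bc x + bc y) *: b /\
  forall i, gc (x + y) i = gc x i + gc y i.
Proof.
move=> /coordsK_in x_eq /coordsK_in y_eq; apply: (coords_unique decomp_free).
rewrite {1}x_eq {1}y_eq addrACA -scalerDl -big_split /=.
by under [X in _ = _ + X]eq_bigr do rewrite scalerDl.
Qed.

Lemma coordsZ l x : S x ->
  bc (l *: x) *: b = (l * bc x) *: b /\ forall i, gc (l *: x) i = l * gc x i.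
Proof.
move=> /coordsK_in x_eq; apply: (coords_unique decomp_free).
rewrite {1}x_eq scalerDr scaler_sumr -scalerA.
by under [X in _ + X = _]eq_bigr do rewrite scalerA.
Qed.

Lemma g_coord_g j i : gc (g j) i = (i == j)%:R.
Proof.
have g_decomp : g j = 0 *: b + \sum_i (i == j)%:R *: g i.
  by rewrite scale0r add0r sum_scale_delta.
exact: (proj2 (coords_unique decomp_free g_decomp)).
Qed.

Lemma g_coordB x y i : S x -> S y -> gc (x - y) i = gc x i - gc y i.
Proof.
move=> Sx Sy; have Sy' : S (- y) by rewrite -scaleN1r; case: S_sub => _ _; apply.
by rewrite (proj2 (coordsD Sx Sy')) -scaleN1r (proj2 (coordsZ _ Sy)) mulN1r.
Qed.

Variables (pi : R) (N : nat) (rho : 'I_N -> R).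
Hypothesis pi_lreg : GRing.lreg pi.
Hypothesis pi_separated : forall c, (forall m, dvdr (pi ^+ m) c) -> c = 0.
Hypothesis pi_residue : forall c, exists! i, dvdr pi (c - rho i).

(* Junk value 0 when pi does not divide c. *)
Definition pi_quot (c : R) : R :=
  if pselect (dvdr pi c) is left pi_dvd then projT1 (cid pi_dvd) else 0.

Lemma pi_quotK c : dvdr pi c -> c = pi * pi_quot c.
Proof.
rewrite /pi_quot => pi_dvd; case: pselect => [pi_dvd'|/(_ pi_dvd)//].
exact: (projT2 (cid pi_dvd')).
Qed.

Lemma pi_quotD c c' : dvdr pi c -> dvdr pi c' ->
  pi_quot (c + c') = pi_quot c + pi_quot c'.
Proof.
move=> dvd_c dvd_c'; apply: pi_lreg.
by rewrite mulrDr -!pi_quotK //; apply: dvdrD.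
Qed.

Lemma pi_quotM l c : dvdr pi c -> pi_quot (l * c) = l * pi_quot c.
Proof.
move=> dvd_c; apply: pi_lreg.
by rewrite mulrCA -!pi_quotK //; apply: dvdr_mull.
Qed.

Definition shift_coord x (i : 'I_n.+1) : R :=
  if (i < n)%N then gc x (inord i.+1) else pi_quot (gc x ord0).

Definition shift x : V := bc x *: b + \sum_i shift_coord x i *: g i.

Definition shift_dom x : Prop := S x /\ dvdr pi (gc x ord0).

Lemma shift_in x : S (shift x).
Proof. exact: decomp_in. Qed.

Lemma coords_shift x :
  bc (shift x) *: b = bc x *: b /\ forall i, gc (shift x) i = shift_coord x i.
Proof. exact: coords_unique. Qed.

Lemma shift_dom_submodule : submodule shift_dom.
Proof.
case: S_sub => S0 SD SZ; split=> [|x y [Sx dx] [Sy dy]|l x [Sx dx]].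
- split=> //; have := proj2 (coordsZ 0 S0) ord0; rewrite scale0r mul0r => ->.
  by exists 0; rewrite mulr0.
- by split; [apply: SD | rewrite (proj2 (coordsD Sx Sy)); apply: dvdrD].
- by split; [apply: SZ | rewrite (proj2 (coordsZ l Sx)); apply: dvdr_mull].
Qed.

Lemma shift_dom_index : index_eq S shift_dom N.
Proof.
have Sr i : S (rho i *: g ord0) by case: S_sub => _ _; apply.
split=> [x []//|]; exists (fun i => rho i *: g ord0); split=> // h Sh.
have gc_sub i : gc (h - rho i *: g ord0) ord0 = gc h ord0 - rho i.
  by rewrite g_coordB // (proj2 (coordsZ _ (Sg _))) g_coord_g eqxx mulr1.
have [i [dvd_i i_uniq]] := pi_residue (gc h ord0).
exists i; split=> [|j [_]]; last by rewrite gc_sub; apply: i_uniq.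
by split; [apply: submoduleB | rewrite gc_sub].
Qed.

Lemma shiftD x y : shift_dom x -> shift_dom y -> shift (x + y) = shift x + shift y.
Proof.
move=> [Sx dx] [Sy dy]; have [bD gD] := coordsD Sx Sy.
rewrite /shift bD scalerDl addrACA -big_split /=; congr (_ + _).
apply: eq_bigr => i _; rewrite -scalerDl /shift_coord.
by case: ifP => _; rewrite gD // pi_quotD.
Qed.

Lemma shiftZ l x : shift_dom x -> shift (l *: x) = l *: shift x.
Proof.
move=> [Sx dx]; have [bZ gZ] := coordsZ l Sx.
rewrite /shift bZ scalerDr scaler_sumr -scalerA; congr (_ + _).
apply: eq_bigr => i _; rewrite scalerA /shift_coord.
by case: ifP => _; rewrite gZ // pi_quotM.
Qed.

Lemma shift_sub_span x : S x -> exists c, shift x - x = \sum_i c i *: g i.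
Proof.
move=> Sx; exists (fun i => shift_coord x i - gc x i).
rewrite {2}(coordsK_in Sx) /shift opprD addrACA subrr add0r -sumrB.
by apply: eq_bigr => i _; rewrite scalerBl.
Qed.

Lemma shift0 : shift 0 = 0.
Proof.
have dom0 : shift_dom 0 by case: shift_dom_submodule.
by rewrite -(scale0r 0) shiftZ // !scale0r.
Qed.

Lemma shift_virtual_endo (br : V -> V -> V) :
  subalgebra br shift_dom ->
  (forall x y, shift_dom x -> shift_dom y ->
     shift (br x y) = br (shift x) (shift y)) ->
  virtual_endo br S shift_dom shift N.
Proof.
move=> dom_subalg shift_morph; split=> //; first exact: shift_dom_index.
  by move=> x _; apply: shift_in.
by split=> // [x y|l x]; [apply: shiftD | apply: shiftZ].
Qed.

Lemma shift_stable_dvd (I : V -> Prop) :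
  (forall x, I x -> shift_dom x) -> (forall x, I x -> I (shift x)) ->
  forall m x, I x -> forall i, dvdr (pi ^+ m) (gc x i).
Proof.
move=> I_dom I_shift; elim=> [|m IHm] x Ix i.
  by exists (gc x i); rewrite expr0 mul1r.
suff dvd_at j z :
    I z -> forall i : 'I_n.+1, val i = j -> dvdr (pi ^+ m.+1) (gc z i).
  exact: dvd_at.
elim: j z => [|j IHj] z Iz {}i i_eq.
  have -> : i = ord0 by apply: val_inj.
  have [_ dz] := I_dom z Iz; have [y y_eq] := IHm _ (I_shift z Iz) ord_max.
  move: y_eq; rewrite (proj2 (coords_shift z)) /shift_coord ltnn => y_eq.
  by exists y; rewrite (pi_quotK dz) y_eq exprS mulrA.
have j_lt : (j < n)%N by rewrite -ltnS -i_eq ltn_ord.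
have := IHj _ (I_shift z Iz) (inord j) (inordK (leqW j_lt)).
rewrite (proj2 (coords_shift z)) /shift_coord inordK ?(leqW j_lt) // j_lt.
by congr dvdr; congr gc; apply: val_inj; rewrite /= inordK ?i_eq.
Qed.

Lemma shift_invariant_ideal (br : V -> V -> V) (I : V -> Prop) :
  invariant_ideal br S shift_dom shift I -> forall x, I x -> exists e, x = e *: b.
Proof.
move=> [_ I_pow I_shift] x Ix.
have I_dom z : I z -> shift_dom z by case/(I_pow 1%N).
exists (bc x); rewrite {1}(coordsK_in (proj1 (I_dom x Ix))) big1 ?addr0 // => i _.
by rewrite (pi_separated (fun m => shift_stable_dvd I_dom I_shift m Ix i)) scale0r.
Qed.
End ShiftEndomorphism.

Section AlmostAbelianBracket.
Variables (R : comNzRingType) (V : lmodType R) (f : {scalar V}) (a : R).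

Definition almost_abelian_bracket (u v : V) : V := a *: (f u *: v - f v *: u).
Local Notation br := almost_abelian_bracket.

Lemma almost_abelian_bracketE u v : br u v = (a * f u) *: v - (a * f v) *: u.
Proof. by rewrite /br scalerBr !scalerA. Qed.

Lemma almost_abelian_bracket_line b e1 e2 : br (e1 *: b) (e2 *: b) = 0.
Proof.
rewrite /br !scalarZ !scalerA.
by rewrite [e1 * _ * _]mulrAC [e2 * _ * _]mulrAC (mulrC e1) subrr scaler0.
Qed.

Lemma submodule_subalgebra S : submodule S -> subalgebra br S.
Proof.
move=> S_sub; split=> // x y Sx Sy; rewrite almost_abelian_bracketE.
by case: (S_sub) => _ _ SZ; apply: submoduleB => //; apply: SZ.
Qed.

Lemma almost_abelian_morph M (phi : V -> V) : submodule M ->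
  (forall x y, M x -> M y -> phi (x + y) = phi x + phi y) ->
  (forall l x, M x -> phi (l *: x) = l *: phi x) ->
  (forall x, M x -> f (phi x) = f x) ->
  forall x y, M x -> M y -> phi (br x y) = br (phi x) (phi y).
Proof.
move=> [_ _ MZ] phiD phiZ phi_f x y Mx My.
by rewrite !almost_abelian_bracketE -!scaleNr phiD ?phiZ ?phi_f //; apply: MZ.
Qed.
Hypothesis R_domain : forall x y : R, x * y = 0 -> x = 0 \/ y = 0.

Lemma line_ideal_eq0 H b k : a != 0 -> f b != 0 -> H k -> f k = 0 ->
  (forall e l, e *: b + l *: k = 0 -> l = 0) ->
  forall I, ideal_of br H I -> (forall x, I x -> exists e, x = e *: b) ->
  forall e, I (e *: b) -> e *: b = 0.
Proof.
move=> a_neq0 fb_neq0 Hk fk0 k_free I [_ _ I_br] I_line e Ie.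
have [e' br_eq] := I_line _ (I_br _ _ Hk Ie).
have : a * (e * f b) = 0.
  apply: (k_free e'); rewrite -br_eq almost_abelian_bracketE fk0 mulr0 scale0r.
  by rewrite sub0r scalarZ addNr.
case/R_domain=> [/eqP|/R_domain[->|/eqP]]; last 2 first.
- by rewrite scale0r.
- by rewrite (negbTE fb_neq0).
by rewrite (negbTE a_neq0).
Qed.
End AlmostAbelianBracket.

Section SelfSimilarity.
Variables (R : comNzRingType) (pi : R) (N : nat) (rho : 'I_N -> R).
Hypothesis pi_lreg : GRing.lreg pi.
Hypothesis pi_separated : forall c, (forall m, dvdr (pi ^+ m) c) -> c = 0.
Hypothesis pi_residue : forall c, exists! i, dvdr pi (c - rho i).

Section Decomposition.
Variables (V : lmodType R) (f : {scalar V}) (a : R) (H : V -> Prop).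
Variables (b : V) (n : nat) (g : 'I_n.+1 -> V).
Hypotheses (H_sub : submodule H) (Hb : H b) (Hg : forall i, H (g i)).
Hypothesis H_span : forall x, H x -> exists e c, x = e *: b + \sum_i c i *: g i.
Hypothesis decomp_free : forall e (c : 'I_n.+1 -> R),
  e *: b + \sum_i c i *: g i = 0 -> e *: b = 0 /\ forall i, c i = 0.
Local Notation br := (almost_abelian_bracket f a).
Local Notation M := (shift_dom H b g pi).
Local Notation phi := (shift b g pi).

Lemma decomposition_self_similar :
  (forall x y, M x -> M y -> phi (br x y) = br (phi x) (phi y)) ->
  (forall I, ideal_of br H I -> (forall x, I x -> exists e, x = e *: b) ->
     forall e, I (e *: b) -> e *: b = 0) ->
  self_similar_sub br H N.
Proof.
move=> phi_morph line_ideal; exists M, phi; split.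
  apply: shift_virtual_endo => //.
  exact/submodule_subalgebra/shift_dom_submodule.
move=> I I_inv x Ix.
have I_line := shift_invariant_ideal H_span decomp_free pi_separated I_inv.
have [e x_eq] := I_line x Ix; case: I_inv => I_ideal _ _.
by rewrite x_eq; apply: (line_ideal I I_ideal I_line); rewrite -x_eq.
Qed.
End Decomposition.

Section RowSelfSimilarity.
Variables (d : nat) (f : {scalar 'rV[R]_d}) (a : R).
Hypothesis R_domain : forall x y : R, x * y = 0 -> x = 0 \/ y = 0.
Hypothesis R_principal : forall J : R^o -> Prop,
  submodule J -> exists g, J g /\ forall c, J c -> dvdr g c.
Local Notation br := (almost_abelian_bracket f a).

Lemma abelian_self_similar H : submodule H -> (exists x, H x /\ x <> 0) ->
  (forall x y, H x -> H y -> br x y = 0) -> self_similar_sub br H N.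
Proof.
move=> H_sub [x0 [Hx0 x0_neq0]] H_abelian.
have [[|n] [g [Hg g_span g_free]]] := rV_submodule_basis R_domain R_principal H_sub.
  by case: x0_neq0; have [c ->] := g_span x0 Hx0; rewrite big_ord0.
have H0 : H 0 by case: H_sub.
have span0 x : H x -> exists e c, x = e *: 0 + \sum_i c i *: g i.
  by move=> /g_span[c ->]; exists 0, c; rewrite scaler0 add0r.
have free0 e c : e *: 0 + \sum_i c i *: g i = 0 ->
    e *: (0 : 'rV_d) = 0 /\ forall i, c i = 0.
  by rewrite scaler0 add0r => /g_free; split.
apply: (decomposition_self_similar H_sub H0 Hg span0 free0).
  move=> x y [Hx _] [Hy _].
  by rewrite !H_abelian ?(shift0 H_sub) //; apply: shift_in.
by move=> I _ _ e _; rewrite scaler0.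
Qed.

Lemma nonabelian_self_similar H : submodule H ->
  (exists x y, [/\ H x, H y & br x y <> 0]) -> self_similar_sub br H N.
Proof.
move=> H_sub [x1 [y1 [Hx1 Hy1 br_neq0]]].
have a_neq0 : a != 0.
  apply: contra_notN br_neq0 => /eqP a0.
  by rewrite /almost_abelian_bracket a0 scale0r.
have [b [Hb f_dvd]] := submodule_pivot R_principal f H_sub.
have fb_neq0 : f b != 0.
  apply: contra_notN br_neq0 => /eqP fb0.
  have f0 x : H x -> f x = 0 by move=> /f_dvd[e ->]; rewrite fb0 mul0r.
  by rewrite /almost_abelian_bracket !f0 // !scale0r subrr scaler0.
have [n [g [gK g_span g_free]]] :=
  rV_submodule_basis R_domain R_principal (submodule_ker f H_sub).
have H_span := pivot_decomposition H_sub Hb f_dvd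
  (fun x Hx fx0 => g_span x (conj Hx fx0)).
have fg0 i : f (g i) = 0 by case: (gK i).
have H_free := pivot_free R_domain fb_neq0 fg0 g_free.
case: n g gK {g_span g_free} H_span fg0 H_free => [|n] g gK H_span fg0 H_free.
  case: br_neq0.
  have [e1 [c1 ->]] := H_span x1 Hx1; have [e2 [c2 ->]] := H_span y1 Hy1.
  by rewrite !big_ord0 !addr0 almost_abelian_bracket_line.
have Hg i : H (g i) by case: (gK i).
have decomp_free e c : e *: b + \sum_i c i *: g i = 0 ->
    e *: b = 0 /\ forall i, c i = 0.
  by move=> /H_free[-> c0]; rewrite scale0r.
apply: (decomposition_self_similar H_sub Hb Hg H_span decomp_free).
  apply: almost_abelian_morph => [|x y|l x|x [Hx _]].
  - exact: shift_dom_submodule.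
  - exact: shiftD.
  - exact: shiftZ.
  - have [c shift_eq] := shift_sub_span H_span pi Hx.
    rewrite -[shift _ _ _ x](subrK x) shift_eq linearD linear_sum.
    rewrite big1 ?add0r // => i _.
    by rewrite scalarZ fg0 mulr0.
apply: (line_ideal_eq0 R_domain a_neq0 fb_neq0 (Hg ord0) (fg0 ord0)).
move=> e l sum0; have [|_ /(_ ord0)] := H_free e (fun i => (i == ord0)%:R * l).
  by under eq_bigr do rewrite -scalerA; rewrite sum_scale_delta.
by rewrite eqxx mul1r.
Qed.

Lemma rV_submodule_self_similar H : submodule H -> (exists x, H x /\ x <> 0) ->
  self_similar_sub br H N.
Proof.
move=> H_sub H_neq0.
have [nonabelian|abelian] := pselect (exists x y, [/\ H x, H y & br x y <> 0]).
  exact: nonabelian_self_similar.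
apply: abelian_self_similar => // x y Hx Hy.
by apply: contra_notP abelian => br_neq0; exists x, y.
Qed.
End RowSelfSimilarity.
End SelfSimilarity.

Lemma Ld_table_entry p d (a : padic p) (i l j : 'I_d.+1) :
  Ld_table a i l 0 j = a * (j != ord0)%:R *
    ((i == ord0)%:R * (l == j)%:R - (l == ord0)%:R * (i == j)%:R).
Proof.
have val_eq0 (x : 'I_d.+1) : (val x == 0%N) = (x == ord0) by [].
rewrite /Ld_table /Ld_basis !val_eq0.
case: (eqVneq i ord0) => [->|i_neq0]; case: (eqVneq l ord0) => [->|l_neq0] /=;
  rewrite ?mxE /=.
- by rewrite subrr mulr0.
- rewrite mul0r subr0 mul1r (eq_sym l).
  by case: eqVneq => [->|_]; rewrite ?l_neq0 ?mulr0 // !mulr1.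
- rewrite mul0r sub0r mul1r (eq_sym i) mulrN.
  by case: eqVneq => [->|_]; rewrite ?i_neq0 ?mulr0 ?oppr0 // !mulr1.
- by rewrite !mul0r subrr mulr0.
Qed.

Lemma Ld_bracketE p d (a : padic p) :
  Ld_bracket a = almost_abelian_bracket (row_coord (ord0 : 'I_d.+1)) a.
Proof.
apply/funext => u; apply/funext => v; apply/rowP => j.
have sum_delta (F : 'I_d.+1 -> padic p) k : \sum_i (i == k)%:R * F i = F k :=
  sum_scale_delta (V := (padic p)^o) F k.
pose c := a * (j != ord0)%:R.
have term i l : (u 0 i * v 0 l *: Ld_table a i l) 0 j =
    (i == ord0)%:R * ((l == j)%:R * (c * u 0 i * v 0 l)) -
    (l == ord0)%:R * ((i == j)%:R * (c * u 0 i * v 0 l)).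
  by rewrite mxE Ld_table_entry /c; ring.
rewrite /Ld_bracket /almost_abelian_bracket summxE !mxE.
under eq_bigr => i _ do
  (rewrite summxE; under eq_bigr => l _ do rewrite term; rewrite sumrB).
rewrite sumrB; under eq_bigr do rewrite -mulr_sumr sum_delta.
rewrite sum_delta exchange_big /=; under eq_bigr do rewrite -mulr_sumr sum_delta.
rewrite sum_delta /c /=; rewrite /row_coord.
by case: (eqVneq j ord0) => [->|_] /=; ring.
Qed.

Lemma Ld_subalgebra_self_similar p d k (a : padic p)
    (H : 'rV[padic p]_d.+1 -> Prop) :
  prime p -> (0 < k)%N -> subalgebra (Ld_bracket a) H ->
  (exists x, H x /\ x <> 0) ->
  self_similar_sub (Ld_bracket a) H (p ^ k)%N.
Proof.
move=> p_prime k_gt0 [H_sub _] H_neq0; rewrite Ld_bracketE.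
apply: (rV_submodule_self_similar (pi := (p ^ k)%:R) (rho := fun i => i%:R))
  => //.
- by rewrite -natr_pow_prime //; apply: natr_pow_lreg.
- by move=> c; rewrite -natr_pow_prime //; apply: natr_pow_expr_separated.
- exact: pa_residue.
- exact: pa_mul_eq0.
- exact: pa_principal.
Qed.

Local Close Scope ring_scope.

Theorem proposition1p40 (p d k : nat) (a : padic p) :
  prime p -> (2 <= d)%N -> (1 <= k)%N ->
  self_similar (@Ld_bracket p d a) (p ^ k) /\
  strongly_hereditarily_self_similar (@Ld_bracket p d a) (p ^ k).
Proof.
move=> p_prime d_ge2 k_gt0; case: d d_ge2 => [//|d] _.
have Ld_self_similar : self_similar (@Ld_bracket p d.+1 a) (p ^ k).
  apply: Ld_subalgebra_self_similar => //.
  exists (delta_mx ord0 ord0); split=> // /matrixP/(_ ord0 ord0).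
  by rewrite !mxE eqxx => /eqP; rewrite oner_eq0.
split=> //; split=> // H; exact: Ld_subalgebra_self_similar.
Qed.
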